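(* Let $p$ be a prime with $p\equiv 1\pmod 3$. Then $$\sum_{\substack{k=0\\ k\neq (p-1)/3}}^{(p-1)/2}\frac{\binom{2k}{k}}{3k+1}\equiv 0\pmod p.$$
   Context: For $0\le k\le (p-1)/2$ with $k\neq (p-1)/3$, the integer $3k+1$ is not divisible by $p$, so each summand is a rational number whose denominator is prime to $p$; the congruence is understood in the ring of rationals with denominators prime to $p$ (equivalently in $\mathbb{Z}_p$). *)

From HB Require Import structures.
From mathcomp Require Import all_boot all_order all_algebra.
Set Implicit Arguments. Unset Strict Implicit. Unset Printing Implicit Defensive.
Import Order.TTheory GRing.Theory Num.Theory.
Local Open Scope ring_scope.

(* A rational x is congruent to 0 modulo p in the ring Z_(p) of rationals
   with denominator prime to p: x = a / b with a, b integers, p not dividing b,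
   and p dividing a. *)
Definition rat_cong0_mod (p : nat) (x : rat) : Prop :=
  exists (a b : int), ~~ (p%:Z %| b)%Z /\ (p%:Z %| a)%Z /\ x = a%:~R / b%:~R.

From HB Require Import structures.
From mathcomp Require Import all_boot all_order all_algebra.
From mathcomp Require Import ring zify.
Set Implicit Arguments.
Unset Strict Implicit.
Unset Printing Implicit Defensive.
Import Order.TTheory GRing.Theory Num.Theory.
Local Open Scope ring_scope.

(* Modulo p, C(2k,k) = C(N,k) (-4)^k with N = (p-1)/2, so the sum is G(1) for
   G = sum_(k <> m) C(2k,k)/(3k+1) x^(3k+1), m = (p-1)/3, and G' is (1 - 4x^3)^N minus the
   monomial x^(p-1), whose integral 1/p is the excluded term.  Thus G(1) is a formal integral
   over [0,1] of (1 - 4y^3)^N.  The substitution y = (1 - x^3)/(3x^2), which vanishes at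
   x = 1, turns 1 - 4y^3 into -(1 - 4x^3)(x^3 + 2)^2/(3x^2)^3; after multiplying by
   (3x^2)^(2p), a constant for differentiation in characteristic p, everything is polynomial.
   As (x^3 + 2)^p = x^(3p) + 2, the new integrand is (-3)^(N+1) (x^(4p) + 2x^p)(1 - 4x^3)^N,
   whose integral is (-3)^(N+1) 3 G(1), while the transformed antiderivative vanishes at
   x = 1.  Hence G(1) = 0. *)

Section CoefWeighted.
Variables (R : fieldType) (a : nat -> R).

Definition coef_weighted (E : {poly R}) : R := \sum_(i < size E) E`_i * a i.

Lemma coef_weightedE n (E : {poly R}) : (size E <= n)%N ->
  coef_weighted E = \sum_(i < n) E`_i * a i.
Proof.
move=> sE; rewrite /coef_weighted (big_ord_widen n (fun i => E`_i * a i) sE).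
rewrite big_mkcond /=; apply: eq_bigr => i _.
by case: ltnP => // /(nth_default 0) ->; rewrite mul0r.
Qed.

Lemma coef_weighted_is_linear : linear_for *%R coef_weighted.
Proof.
move=> c E F; pose n := maxn (size E) (size F).
have sZE : (size (c *: E) <= n)%N by rewrite (leq_trans (size_scale_leq _ _)) ?leq_maxl.
rewrite !(@coef_weightedE n) ?leq_maxl ?leq_maxr //; last first.
  by rewrite (leq_trans (size_polyD _ _)) // geq_max sZE leq_maxr.
rewrite mulr_sumr -big_split; apply: eq_bigr => i _.
by rewrite coefD coefZ mulrDl mulrA.
Qed.

HB.instance Definition _ :=
  GRing.isLinear.Build R {poly R} R *%R coef_weighted coef_weighted_is_linear.

Lemma coef_weightedXn e : coef_weighted 'X^e = a e.
Proof.
rewrite /coef_weighted size_polyXn big_ord_recr /= coefXn eqxx mul1r big1 ?add0r //.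
by move=> i _; rewrite coefXn (ltn_eqF (ltn_ord i)) mul0r.
Qed.

Lemma coef_weighted_mulXn l (E : {poly R}) : (forall i, a (l + i) = a i) ->
  coef_weighted ('X^l * E) = coef_weighted E.
Proof.
move=> a_per; rewrite (@coef_weightedE (l + size E)); last first.
  by rewrite (leq_trans (size_polyMleq _ _)) // size_polyXn addSn.
rewrite big_split_ord /= big1 ?add0r => [|i _]; last by rewrite coefXnM ltn_ord mul0r.
by apply: eq_bigr => i _; rewrite coefXnM ltnNge leq_addr addKn a_per.
Qed.

End CoefWeighted.

Section FormalIntegral.
Variable R : fieldType.
Implicit Types (E F : {poly R}) (l n : nat).

(* The formal integral over [0,1].  A monomial X^i with i.+1 = 0 in R gets the junk weight
   0^-1 = 0; [null_coef_sum] collects the coefficients lost that way when integrating a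
   derivative. *)
Definition integral01 E : R := coef_weighted (fun i => i.+1%:R^-1) E.
Definition null_coef_sum E : R :=
  coef_weighted (fun i => (i%:R == 0 :> R)%:R) E.

HB.instance Definition _ := GRing.Linear.copy integral01 (coef_weighted _).
HB.instance Definition _ := GRing.Linear.copy null_coef_sum (coef_weighted _).

Lemma integral01_deriv_null_Xn n :
  integral01 ('X^n)^`() + null_coef_sum 'X^n = 1 :> R.
Proof.
rewrite derivXn raddfMn /= /integral01 /null_coef_sum !coef_weightedXn.
case: n => [|n] /=; first by rewrite raddf0 eqxx add0r.
rewrite -[_ *+ n.+1]mulr_natr; case: eqP => [-> | /eqP n0]; first by rewrite mulr0 add0r.
by rewrite mulVf // addr0.
Qed.

Lemma horner1_integral01_deriv F :
  F.[1] = integral01 F^`() + null_coef_sum F.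
Proof.
rewrite -[F]coefK poly_def horner_sum linear_sum !raddf_sum /= -big_split /=.
apply: eq_bigr => i _; move: F`_i => a.
by rewrite hornerZ hornerXn expr1n !linearZ /= -mulrDr integral01_deriv_null_Xn.
Qed.

Lemma integral01Xn n : integral01 'X^n = n.+1%:R^-1 :> R.
Proof. exact: coef_weightedXn. Qed.

Lemma null_coef_sumXn n : null_coef_sum 'X^n = (n%:R == 0 :> R)%:R.
Proof. exact: coef_weightedXn. Qed.

Lemma integral01_mulXn l E : l%:R = 0 :> R -> integral01 ('X^l * E) = integral01 E.
Proof. by move=> l0; apply: coef_weighted_mulXn => i; rewrite -addnS natrD l0 add0r. Qed.

Lemma null_coef_sum_mulXn l E : l%:R = 0 :> R -> null_coef_sum ('X^l * E) = null_coef_sum E.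
Proof. by move=> l0; apply: coef_weighted_mulXn => i; rewrite natrD l0 add0r. Qed.

End FormalIntegral.

Lemma central_binomS k :
  (k.+1 * 'C(2 * k.+1, k.+1) = 2 * (2 * k).+1 * 'C(2 * k, k))%N.
Proof.
have A := mul_bin_diag (2 * k).+1 k.
have B := mul_bin_diag (2 * k).+2 k.
have C : 'C((2 * k).+1, k) = 'C((2 * k).+1, k.+1).
  rewrite -(@bin_sub (2 * k).+1 k); last lia.
  by have -> : ((2 * k).+1 - k = k.+1)%N by lia.
rewrite /= C in A B.
have -> : (2 * k.+1 = (2 * k).+2)%N by lia.
nia.
Qed.

Section PrimeChar.
Variables (R : fieldType) (p : nat).
Hypothesis pR : p \in [pchar R].

Lemma sum_invS_natr_pchar :
  \sum_(i < p) (i.+1%:R : R)^-1 = \sum_(i < p) (i%:R : R)^-1.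
Proof.
case: p pR => [|p'] pR'; first by rewrite !big_ord0.
by rewrite big_ord_recr big_ord_recl /= (pcharf0 pR') invr0 addr0 add0r.
Qed.

Lemma sum_inv_natr_pchar : 2%:R != 0 :> R -> \sum_(i < p) (i%:R : R)^-1 = 0.
Proof.
move=> two_neq0.
have s_opp : \sum_(i < p) (i%:R : R)^-1 = - \sum_(i < p) (i%:R : R)^-1.
  rewrite -[in RHS]sum_invS_natr_pchar (reindex_inj rev_ord_inj) /= -sumrN.
  by apply: eq_bigr => i _; rewrite natrB ?ltn_ord // (pcharf0 pR) sub0r invrN.
apply/eqP; rewrite -(mulIr_eq0 _ (mulIf two_neq0)) mulr_natr mulr2n.
by rewrite {1}s_opp addNr.
Qed.

Lemma central_binom_pchar N k : p = (2 * N).+1 -> (k <= N)%N ->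
  'C(2 * k, k)%:R = 'C(N, k)%:R * (- 4%:R) ^+ k :> R.
Proof.
move=> p_eq; elim: k => [|k IHk] kN; first by rewrite !bin0 mulr1.
have k1_neq0 : k.+1%:R != 0 :> R.
  by rewrite -(dvdn_pcharf pR) p_eq; apply/negP => /dvdn_leq; lia.
apply: (mulfI k1_neq0).
have p0 : (2 * N).+1%:R = 0 :> R by rewrite -p_eq (pcharf0 pR).
rewrite -natrM central_binomS [RHS]mulrA -[k.+1%:R * _]natrM (mul_bin_left N k).
rewrite (natrM _ (2 * (2 * k).+1)) IHk; last exact: ltnW.
rewrite (natrM _ (N - k)) (natrB _ (ltnW kN)) exprS.
move: ('C(N, k)%:R : R) ((-4) ^+ k : R) => a b.
apply/eqP; rewrite -subr_eq0; apply/eqP.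
by transitivity (2%:R * a * b * (2 * N).+1%:R); [ring | rewrite p0 mulr0].
Qed.

End PrimeChar.

Lemma deriv_exp_mul_exp (R : comNzRingType) (x y : {poly R}) a b :
  (a + b).+2%:R = 0 :> R ->
  (x ^+ a.+1 * y ^+ b.+1)^`() = (x^`() * y - x * y^`()) * (x ^+ a * y ^+ b) *+ a.+1.
Proof.
move=> ab0; have b1 : b.+1%:R = - a.+1%:R :> {poly R}.
  by apply/eqP; rewrite -subr_eq0 opprK -natrD addnC addSn addnS -polyC_natr ab0 polyC0.
rewrite derivM !deriv_exp /= -[_ *+ b.+1]mulr_natr b1 !exprS.
ring.
Qed.

Section CentralBinomSum.
Variables (R : fieldType) (p h : nat).
Hypothesis pR : p \in [pchar R].
Hypothesis p_eq : p = (6 * h).+1.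

Local Notation N := (3 * h)%N.
Local Notation m := (2 * h)%N.
Local Notation c k := ('C(2 * k, k)%:R : R).
Local Notation w := (1 - 4%:R * 'X^3 : {poly R}).
Local Notation Q := (1 - 'X^3 : {poly R}).
Local Notation S := (3%:R * 'X^2 : {poly R}).
Local Notation wr := (Q^`() * S - Q * S^`()).

Let p_gt3 : (3 < p)%N.
Proof. by have := pcharf_prime pR; rewrite p_eq; case: h => // h' _; lia. Qed.

Lemma natr_neq0_ltp n : (0 < n < p)%N -> n%:R != 0 :> R.
Proof.
case/andP=> n_gt0 n_ltp; rewrite -(dvdn_pcharf pR).
by apply/negP => /(dvdn_leq n_gt0); rewrite leqNgt n_ltp.
Qed.

Lemma natr_3k1_neq0 k : (k <= N)%N -> k != m -> (3 * k).+1%:R != 0 :> R.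
Proof.
move=> kN km; rewrite -(dvdn_pcharf pR); apply/negP => /dvdnP [q hq].
move/eqP: km; rewrite p_eq in hq; case: q hq => [|[|q]] hq; nia.
Qed.

Definition binom_antideriv : {poly R} :=
  \sum_(k < N.+1 | k != m :> nat) (c k / (3 * k).+1%:R) *: 'X^((3 * k).+1).
Local Notation G := binom_antideriv.

Lemma horner1_binom_antideriv :
  G.[1] = \sum_(k < N.+1 | k != m :> nat) c k / (3 * k).+1%:R.
Proof.
rewrite horner_sum; apply: eq_bigr => k _.
by rewrite hornerZ hornerXn expr1n mulr1.
Qed.

Lemma exprw_central_binom : w ^+ N = \sum_(k < N.+1) c k *: 'X^(3 * k).
Proof.
rewrite exprDn; apply: eq_bigr => k _.
rewrite expr1n mul1r (central_binom_pchar pR (N := N)); [|lia|by rewrite -ltnS].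
rewrite -scalerA scaler_nat -mul_polyC rmorphXn /= polyCN polyC_natr.
by rewrite exprM -mulNr exprMn.
Qed.

Lemma deriv_binom_antideriv : G^`() = w ^+ N - c m *: 'X^(3 * m).
Proof.
have m_lt : (m < N.+1)%N by lia.
rewrite exprw_central_binom (bigD1 (Ordinal m_lt)) //= addrAC subrr add0r raddf_sum.
apply: eq_big => // k km /=; rewrite derivZ derivXn -scaler_nat scalerA divfK //.
by rewrite natr_3k1_neq0 // -ltnS.
Qed.

Lemma null_coef_sum_binom_antideriv : null_coef_sum G = 0.
Proof.
rewrite linear_sum big1 // => k km; rewrite linearZ /= null_coef_sumXn.
by rewrite (negbTE (natr_3k1_neq0 _ km)) ?mulr0 // -ltnS.
Qed.

Lemma integral01_exprw : integral01 (w ^+ N) = G.[1].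
Proof.
rewrite -[w ^+ N](subrK (c m *: 'X^(3 * m))) -deriv_binom_antideriv.
rewrite linearD linearZ /= integral01Xn.
have -> : (3 * m).+1 = p by lia.
rewrite (pcharf0 pR) invr0 mulr0 addr0.
by rewrite horner1_integral01_deriv null_coef_sum_binom_antideriv addr0.
Qed.

Let pRX : p \in [pchar {poly R}]. Proof. by rewrite pchar_poly. Qed.

Lemma exprp_subst_num : Q ^+ p = 1 - 'X^(3 * p).
Proof. by rewrite -(pFrobenius_autE pRX) rmorphB rmorph1 /= pFrobenius_autE exprM. Qed.

Lemma exprp_X3_add2 : ('X^3 + 2%:R : {poly R}) ^+ p = 'X^(3 * p) + 2%:R.
Proof. by rewrite -(pFrobenius_autE pRX) rmorphD rmorph_nat /= pFrobenius_autE exprM. Qed.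

(* S^(2p) G(Q/S), the substitution y = Q/S cleared of denominators. *)
Definition binom_subst : {poly R} := \sum_(k < N.+1 | k != m :> nat)
  (c k / (3 * k).+1%:R) *: (Q ^+ (3 * k).+1 * S ^+ (N + 3 * (N - k)).+1).
Local Notation K := binom_subst.

Lemma horner1_binom_subst : K.[1] = 0.
Proof.
have Q1 : Q.[1] = 0 by rewrite !hornerE expr1n subrr.
rewrite horner_sum big1 // => k _.
by rewrite hornerZ hornerM horner_exp Q1 expr0n mul0r mulr0.
Qed.

Lemma deriv_binom_subst :
  K^`() = wr * \sum_(k < N.+1 | k != m :> nat) c k *: (Q ^+ (3 * k) * S ^+ (N + 3 * (N - k))).
Proof.
rewrite linear_sum mulr_sumr; apply: eq_bigr => k km /=.
have kN : (k <= N)%N by rewrite -ltnS.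
rewrite derivZ deriv_exp_mul_exp; last first.
  by rewrite (_ : (_ + _).+2 = 2 * p)%N ?natrM ?(pcharf0 pR) ?mulr0 //; lia.
by rewrite -scaler_nat scalerA divfK ?natr_3k1_neq0 // scalerAr.
Qed.

Lemma sum_binom_subst_terms : \sum_(k < N.+1) c k *: (Q ^+ (3 * k) * S ^+ (N + 3 * (N - k)))
  = S ^+ N * (S ^+ 3 - 4%:R * Q ^+ 3) ^+ N.
Proof.
rewrite exprDn mulr_sumr; apply: eq_bigr => k _.
rewrite (central_binom_pchar pR (N := N)); [|lia|by rewrite -ltnS].
rewrite -mul_polyC rmorphM rmorphXn /= polyCN polyC_natr polyC_natr.
rewrite exprD [S ^+ (3 * (N - k))]exprM [Q ^+ (3 * k)]exprM.
rewrite -[- (4%:R * _)]mulNr [(_ * Q ^+ 3) ^+ k]exprMn.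
move: (S ^+ N) ((S ^+ 3) ^+ (N - k)) ((Q ^+ 3) ^+ k) ((- 4%:R) ^+ k) => A B C D.
by rewrite -mulr_natl; ring.
Qed.

Lemma wronskian_substE : wr = - (3%:R * 'X * ('X^3 + 2%:R)).
Proof. by rewrite !derivE /=; ring. Qed.

Lemma wronskian_mul_sum_binom_subst_terms : wr * (S ^+ N * (S ^+ 3 - 4%:R * Q ^+ 3) ^+ N) =
  (- 3%:R) ^+ N.+1 *: (('X^(4 * p) + 2%:R *: 'X^p) * w ^+ N).
Proof.
have -> : ('X^(4 * p) + 2%:R *: 'X^p : {poly R}) = 'X^p * ('X^3 + 2%:R) ^+ p.
  rewrite exprp_X3_add2 mulrDr -exprD scaler_nat mulr_natr.
  by rewrite (_ : 4 * p = p + 3 * p)%N //; lia.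
(* 1 - 4 (Q/S)^3 = - w (X^3 + 2)^2 / S^3 *)
have curve : S ^+ 3 - 4%:R * Q ^+ 3 = - (w * ('X^3 + 2%:R) ^+ 2) by ring.
have exprp y : y ^+ p = y * (y ^+ 2) ^+ N :> {poly R}.
  by rewrite p_eq exprS -exprM mulnA.
rewrite wronskian_substE curve !exprp -mul_polyC rmorphXn /= polyCN polyC_natr.
rewrite [(- 3%:R) ^+ N.+1]exprS -[- (w * _)]mulN1r -[- 3%:R]mulN1r.
rewrite [(-1 * 3%:R) ^+ N]exprMn [(-1 * _) ^+ N]exprMn [(w * _) ^+ N]exprMn [S ^+ N]exprMn.
move: ((-1) ^+ N) (3%:R ^+ N) (('X^2) ^+ N) (w ^+ N) ((('X^3 + 2%:R) ^+ 2) ^+ N).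
by move=> a b c d e; ring.
Qed.

Lemma ndvd_subst_exponent k i : (k < m)%N -> (i <= (3 * k).+1)%N ->
  ~~ (p %| 3 * i + 2 * (N + 3 * (N - k)).+1)%N.
Proof.
move=> km ik; apply/negP => /dvdnP [q]; rewrite p_eq => hq.
case: q hq => [|[|[|[|[|q]]]]] hq; nia.
Qed.

Lemma null_coef_sum_subst_term k : (k <= N)%N -> k != m ->
  null_coef_sum (Q ^+ (3 * k).+1 * S ^+ (N + 3 * (N - k)).+1) = 0.
Proof.
move=> kN km; set e := (N + 3 * (N - k)).+1.
case: (ltngtP k m) => [k_lt_m | k_gt_m | k_eq_m]; last by rewrite k_eq_m eqxx in km.
- rewrite exprBn mulr_suml linear_sum big1 // => i _ /=.
  have -> : (-1) ^+ i * 1 ^+ ((3 * k).+1 - i) * ('X^3) ^+ i *+ 'C((3 * k).+1, i) * S ^+ e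
      = ((-1) ^+ i * 'C((3 * k).+1, i)%:R * 3%:R ^+ e) *: 'X^(3 * i + 2 * e).
    rewrite -mul_polyC !rmorphM !rmorphXn /= polyCN polyC1 !polyC_natr expr1n mulr1.
    rewrite [S ^+ e]exprMn exprD ['X^(3 * i)]exprM ['X^(2 * e)]exprM.
    rewrite -[_ *+ 'C(_, _)]mulr_natr.
    by move: ((-1) ^+ i) (3%:R ^+ e) (('X^3) ^+ i) (('X^2) ^+ e) => a b u v; ring.
  rewrite linearZ /= null_coef_sumXn -(dvdn_pcharf pR).
  by rewrite (negbTE (ndvd_subst_exponent k_lt_m _)) ?mulr0 // -ltnS.
- have -> : (3 * k).+1 = (p + 3 * (k - m))%N by rewrite p_eq; lia.
  rewrite exprD exprp_subst_num -mulrA mulrBl mul1r linearB /=.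
  by rewrite null_coef_sum_mulXn ?subrr // natrM (pcharf0 pR) mulr0.
Qed.

Lemma null_coef_sum_binom_subst : null_coef_sum K = 0.
Proof.
rewrite linear_sum big1 // => k km; rewrite linearZ /= null_coef_sum_subst_term ?mulr0 //.
by rewrite -ltnS.
Qed.

Lemma geometric_subst_num : Q ^+ p.-1 = \sum_(i < p) 'X^(3 * i).
Proof.
have Q_neq0 : Q != 0.
  by apply/eqP => /(congr1 (horner^~ 0)) /eqP; rewrite !hornerE expr0n subr0 oner_eq0.
apply: (mulfI Q_neq0); rewrite -exprS prednK ?prime_gt0 ?(pcharf_prime pR) //.
rewrite exprp_subst_num exprM -[1 in LHS](expr1n _ p) subrXX; congr (_ * _).
by apply: eq_bigr => i _; rewrite expr1n mul1r exprM.
Qed.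

Lemma integral01_wronskian_subst_center :
  integral01 (wr * (Q ^+ (3 * m) * S ^+ (N + 3 * (N - m)))) = 0.
Proof.
have -> : (N + 3 * (N - m) = p.-1)%N by rewrite p_eq; lia.
have -> : (3 * m = p.-1)%N by rewrite p_eq; lia.
rewrite geometric_subst_num mulr_suml mulr_sumr linear_sum /=.
have termE i : wr * ('X^(3 * i) * S ^+ p.-1) =
    - 3%:R ^+ p *: ('X^(12 * h + 4 + 3 * i) + 2%:R *: 'X^(12 * h + 1 + 3 * i)).
  have -> : S ^+ p.-1 = 3%:R ^+ (6 * h) * 'X^(12 * h).
    by rewrite p_eq exprMn -exprM (_ : 2 * (6 * h) = 12 * h)%N // mulnA.
  rewrite ['X^(12 * h + 4 + 3 * i)]exprD ['X^(12 * h + 4)]exprD.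
  rewrite ['X^(12 * h + 1 + 3 * i)]exprD ['X^(12 * h + 1)]exprD wronskian_substE.
  rewrite -!mul_polyC rmorphN rmorphXn /= !polyC_natr p_eq [3%:R ^+ (6 * h).+1]exprS.
  by move: (3%:R ^+ (6 * h)) ('X^(12 * h)) ('X^(3 * i)) => a u v; ring.
have natr_2p n : (2 * p + n)%:R = n%:R :> R.
  by rewrite natrD natrM (pcharf0 pR) mulr0 add0r.
have expS1 i : ((12 * h + 4 + 3 * i).+1 = 2 * p + 3 * i.+1)%N by rewrite p_eq; lia.
have expS2 i : ((12 * h + 1 + 3 * i).+1 = 2 * p + 3 * i)%N by rewrite p_eq; lia.
under eq_bigr => i _ do
  rewrite termE linearZ linearD linearZ /= !integral01Xn expS1 expS2 !natr_2p !natrM !invfM.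
rewrite -mulr_sumr big_split /= -!mulr_sumr (sum_invS_natr_pchar pR).
rewrite (sum_inv_natr_pchar pR) ?mulr0 ?addr0 ?mulr0 //.
by apply: natr_neq0_ltp; lia.
Qed.

Lemma horner1_binom_antideriv_eq0 : G.[1] = 0.
Proof.
have m_lt : (m < N.+1)%N by lia.
have sum_offcenter : \sum_(k < N.+1 | k != m :> nat)
      c k *: (Q ^+ (3 * k) * S ^+ (N + 3 * (N - k))) =
    S ^+ N * (S ^+ 3 - 4%:R * Q ^+ 3) ^+ N - c m *: (Q ^+ (3 * m) * S ^+ (N + 3 * (N - m))).
  by rewrite -sum_binom_subst_terms [in RHS](bigD1 (Ordinal m_lt)) //= addrAC subrr add0r.
have := horner1_integral01_deriv K.
rewrite horner1_binom_subst null_coef_sum_binom_subst addr0 deriv_binom_subst.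
rewrite sum_offcenter mulrBr wronskian_mul_sum_binom_subst_terms -scalerAr.
rewrite [integral01 (_ - _)]linearB !linearZ /= integral01_wronskian_subst_center mulr0 subr0.
rewrite mulrDl linearD -scalerAl linearZ /=.
have p4_0 : (4 * p)%:R = 0 :> R by rewrite natrM (pcharf0 pR) mulr0.
rewrite (integral01_mulXn _ p4_0) (integral01_mulXn _ (pcharf0 pR)) integral01_exprw.
have three_neq0 : 3%:R != 0 :> R by apply: natr_neq0_ltp; lia.
rewrite -[X in X + _]mul1r -mulrDl -(natrD _ 1 2) => /esym/eqP.
by rewrite mulf_eq0 expf_eq0 oppr_eq0 mulf_eq0 (negbTE three_neq0) andbF /= => /eqP.
Qed.

Lemma sum_central_binom_div_pchar :
  \sum_(k < N.+1 | k != m :> nat) c k / (3 * k).+1%:R = 0.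
Proof. by rewrite -horner1_binom_antideriv horner1_binom_antideriv_eq0. Qed.

End CentralBinomSum.

Lemma rat_cong0_mod_sum (p : nat) (I : finType) (P : pred I) (a d : I -> nat) :
  prime p -> (forall i, P i -> ~~ (p %| d i)%N) ->
  \sum_(i | P i) (a i)%:R / (d i)%:R = 0 :> 'F_p ->
  rat_cong0_mod p (\sum_(i | P i) (a i)%:R / (d i)%:R).
Proof.
move=> p_prime p_ndvd sum0.
pose b := (\prod_(i | P i) d i)%N.
have d_dvd_b i : P i -> (d i %| b)%N by move=> Pi; rewrite /b (bigD1 i) //= dvdn_mulr.
have p_ndvd_b : ~~ (p %| b)%N.
  by rewrite /b Euclid_dvd_prod // big1 // => i /p_ndvd/negbTE.
have b_gt0 : (0 < b)%N by case: (posnP b) p_ndvd_b => // ->; rewrite dvdn0.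
exists (\sum_(i | P i) a i * (b %/ d i))%N, b; split; first by rewrite dvdzE.
split.
  rewrite dvdzE /= (dvdn_pcharf (pchar_Fp p_prime)) natr_sum; apply/eqP.
  transitivity (b%:R * \sum_(i | P i) (a i)%:R / (d i)%:R : 'F_p); last by rewrite sum0 mulr0.
  rewrite mulr_sumr; apply: eq_bigr => i Pi.
  have d_unit : ((d i)%:R : 'F_p) \is a GRing.unit.
    by rewrite unitfE -(dvdn_pcharf (pchar_Fp p_prime)) p_ndvd.
  by rewrite natrM natr_div ?d_dvd_b // mulrCA mulrA.
rewrite -!pmulrn natr_sum mulr_suml; apply: eq_bigr => i Pi.
have d_gt0 : (0 < d i)%N by case: (posnP (d i)) (p_ndvd _ Pi) => // ->; rewrite dvdn0.
rewrite natrM natr_div ?d_dvd_b ?unitfE ?pnatr_eq0 -?lt0n //.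
by rewrite mulrCA [_ * _ / b%:R]mulrC mulKf // pnatr_eq0 -lt0n.
Qed.

Theorem theorem1p3 (p : nat) (hp : prime p) (hp3 : (p %% 3 = 1)%N) :
  rat_cong0_mod p
    (\sum_(0 <= k < (p.-1 %/ 2).+1 | k != (p.-1 %/ 3)%N)
        ('C(2 * k, k))%:R / (3 * k + 1)%:R : rat).
Proof.
have [h p_eq] : exists h, p = (6 * h).+1.
  exists (p %/ 6)%N; case: (even_prime hp) => [p2 | p_odd]; first by rewrite p2 in hp3.
  by move: (div.modn2 p); rewrite p_odd; lia.
have -> : (p.-1 %/ 2 = 3 * h)%N by rewrite p_eq; lia.
have -> : (p.-1 %/ 3 = 2 * h)%N by rewrite p_eq; lia.
have pF := pchar_Fp hp.
rewrite big_mkord; apply: rat_cong0_mod_sum => // [k km|].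
  by rewrite (dvdn_pcharf pF) addn1 (natr_3k1_neq0 pF p_eq) // -ltnS.
under eq_bigr do rewrite addn1.
exact: sum_central_binom_div_pchar pF p_eq.
Qed.
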